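(* Let $g(x_1,\ldots,x_n)=\prod_{j\in\mathcal{J}}\phi_j(x_i:i\in\alpha_j)$ be a global function on a product of finite alphabets with nonnegative local functions, and run the support passing algorithm on its factor graph, initialized by $\lambda(\mu^1_{X\to\phi})=\lambda(\nu^1_{\phi\to X})=\mathcal{X}$ for every variable node $X$ and adjacent factor node $\phi$, where $\mathcal{X}$ is the alphabet of $X$. Then: (1) for all $k$, $\lambda(\mu^{k+1}_{X\to\phi})\subseteq\lambda(\mu^k_{X\to\phi})$ and $\lambda(\nu^{k+1}_{\phi\to X})\subseteq\lambda(\nu^k_{\phi\to X})$; hence after finitely many iterations the supports of all messages remain unchanged; (2) for every variable node $X$ (with value $x$), every adjacent factor node $\phi$ and every $k$, the support of the marginal $x\mapsto\sum_{\text{all variables other than } x}g(x_1,\ldots,x_n)$ is a subset of both $\lambda(\mu^k_{X\to\phi})$ and $\lambda(\nu^k_{\phi\to X})$.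
   Context: Factor graph: for $g=\prod_{j}\phi_j(x_i:i\in\alpha_j)$, the bipartite graph with variable nodes $X_1,\ldots,X_n$, factor nodes $\phi_j$, and an edge $(X_i,\phi_j)$ whenever $x_i\in\alpha_j$; $n(v)$ denotes the set of neighbours of a node $v$. For a function $h$, $\lambda(h)=\{x:h(x)\neq0\}$, and for $h(x,y)$ with $y$ fixed, $\lambda(h(x\mid y))=\{x:h(x,y)\neq0\}$. The support passing algorithm passes sets (supports) $\lambda(\mu^k_{X\to\phi})\subseteq\mathcal{X}$ from variable nodes to factor nodes and $\lambda(\nu^k_{\phi\to X})\subseteq\mathcal{X}$ from factor nodes to variable nodes, updated by $\lambda(\mu^{k+1}_{X\to\phi})=\bigcap_{\psi\in n(X)\setminus\{\phi\}}\lambda(\nu^k_{\psi\to X})$ (empty intersection $=\mathcal{X}$) and $\lambda(\nu^{k+1}_{\phi\to X})=\bigcup\lambda\big(\phi(x\mid x^*:X^*\in n(\phi)\setminus\{X\})\big)$, the union being over all assignments with $x^*\in\lambda(\mu^k_{X^*\to\phi})$ for each $X^*\in n(\phi)\setminus\{X\}$. *)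

From HB Require Import structures.
From mathcomp Require Import all_boot all_order all_algebra.
Set Implicit Arguments. Unset Strict Implicit. Unset Printing Implicit Defensive.
Import Order.TTheory GRing.Theory Num.Theory.
Local Open Scope ring_scope.

(* Factor graph setting:
   - V : finite type of variable indices (variables X_i, i : V),
   - A i : finite alphabet of variable X_i,
   - J : finite type of factor indices, alpha j : {set V} the scope of phi_j,
   - phi j : a local function; it is given as a function of a full
     configuration, together with the hypothesis (in the theorem) that it only
     depends on the coordinates in alpha j.
   The variable node X_i and factor node phi_j are adjacent iff i \in alpha j. *)

Section SupportPassing.

Variables (V : finType) (A : V -> finType) (J : finType).
Variable (alpha : J -> {set V}).

Definition config := {dffun forall i : V, A i}.

Variable (R : realDomainType).
Variable (phi : J -> config -> R).

Definition glob (y : config) : R := \prod_(j : J) phi j y.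

Definition marginal (i : V) (x : A i) : R :=
  \sum_(y : config | y i == x) glob y.

Definition marg_support (i : V) : {set A i} := [set x | marginal x != 0].

(* supports of messages: mu i j = lambda(mu_{X_i -> phi_j}),
                         nu j i = lambda(nu_{phi_j -> X_i}) *)
Record msgs := Msgs {
  mu : forall (i : V) (j : J), {set A i};
  nu : forall (j : J) (i : V), {set A i} }.

Definition msgs_init : msgs := Msgs (fun i _ => setT) (fun _ i => setT).

Definition msgs_step (m : msgs) : msgs :=
  Msgs
    (* intersection over psi in n(X_i) \ {phi_j}; empty intersection = setT *)
    (fun i j => \bigcap_(j' : J | (i \in alpha j') && (j' != j)) nu m j' i)
    (fun j i => [set x : A i | [exists y : config,
        [&& y i == x,
            [forall i' : V, ((i' \in alpha j) && (i' != i)) ==> (y i' \in mu m i' j)]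
          & phi j y != 0]]]).

(* support_msgs k = messages at iteration k (iterations numbered from 1;
   support_msgs 0 is an unused dummy equal to the initialization) *)
Fixpoint support_msgs (k : nat) : msgs :=
  match k with
  | 0 => msgs_init
  | 1 => msgs_init
  | k'.+1 => msgs_step (support_msgs k')
  end.

End SupportPassing.

From HB Require Import structures.
From mathcomp Require Import all_boot all_order all_algebra.
Import Order.TTheory GRing.Theory Num.Theory.
Set Implicit Arguments. Unset Strict Implicit.
Local Open Scope ring_scope.

(* Support passing is a monotone map on families of supports, started from the
   top family; hence its iterates decrease, and as the total size of the
   supports is a natural number they stall after finitely many steps, after
   which they are constant.  The supports of the marginals form a family below
   every iterate: if [g(y) > 0] then, by nonnegativity, every coordinate [y i]
   lies in the support of the i-th marginal, and every factor of [g(y)] is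
   nonzero, so [y] witnesses [y i] in every message. *)

Lemma nonincreasing_nat_stalls (u : nat -> nat) :
  (forall k, (0 < k)%N -> (u k.+1 <= u k)%N) ->
  exists2 K, (0 < K)%N & u K.+1 = u K.
Proof.
move=> u_decr; suff: forall n k, (0 < k)%N -> (u k <= n)%N ->
    exists2 K, (0 < K)%N & u K.+1 = u K by apply; [exact: (ltn0Sn 0) | exact: leqnn].
elim=> [| n IHn] k k_gt0 uk_le.
  by exists k => //; apply/eqP; rewrite eqn_leq u_decr //= (leq_trans uk_le).
have [uk_eq | uk_neq] := eqVneq (u k.+1) (u k); first by exists k.
apply: IHn k.+1 _ _ => //; rewrite -ltnS (leq_trans _ uk_le) //.
by rewrite ltn_neqAle uk_neq u_decr.
Qed.

Section SupportPassingTheory.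

Variables (V : finType) (A : V -> finType) (J : finType).

Definition msgs_sub (m m' : msgs A J) :=
  (forall i j, mu m i j \subset mu m' i j) /\ (forall j i, nu m j i \subset nu m' j i).

Definition msgs_eq (m m' : msgs A J) :=
  (forall i j, mu m i j = mu m' i j) /\ (forall j i, nu m j i = nu m' j i).

Lemma msgs_sub_init m : msgs_sub m (msgs_init A J).
Proof. by split=> *; apply: subsetT. Qed.

Lemma msgs_eq_trans m1 m2 m3 : msgs_eq m1 m2 -> msgs_eq m2 m3 -> msgs_eq m1 m3.
Proof. by move=> [mu12 nu12] [mu23 nu23]; split=> ? ?; rewrite ?mu12 ?nu12. Qed.

Lemma msgs_eqP m m' : msgs_eq m m' <-> msgs_sub m m' /\ msgs_sub m' m.
Proof.
split=> [[Emu Enu] | [[mu_le nu_le] [mu_ge nu_ge]]].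
  by split; split=> ? ?; rewrite ?Emu ?Enu.
by split=> ? ?; apply/eqP; rewrite eqEsubset ?mu_le ?mu_ge ?nu_le ?nu_ge.
Qed.

Definition msgs_size (m : msgs A J) : nat :=
  \sum_(i : V) \sum_(j : J) (#|mu m i j| + #|nu m j i|).

Lemma msgs_size_leqif m m' : msgs_sub m m' ->
  (msgs_size m <= msgs_size m' ?=
     iff [forall i, forall j, (mu m i j == mu m' i j) && (nu m j i == nu m' j i)])%N.
Proof.
move=> [mu_le nu_le]; rewrite /msgs_size.
apply: leqif_sum => i _; apply: leqif_sum => j _.
by apply: leqif_add; apply: subset_leqif_cards.
Qed.

Lemma msgs_size_eq m m' :
  msgs_sub m m' -> msgs_size m = msgs_size m' -> msgs_eq m m'.
Proof.
move=> m_le /eqP; rewrite (msgs_size_leqif m_le) => /forallP Em.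
by split=> [i j | j i]; have /andP[/eqP Emu /eqP Enu] := forallP (Em i) j.
Qed.

Variables (alpha : J -> {set V}) (R : realDomainType) (phi : J -> config A -> R).

Local Notation step := (msgs_step alpha phi).
Local Notation iterate := (support_msgs alpha phi).

Lemma msgs_step_mono m m' : msgs_sub m m' -> msgs_sub (step m) (step m').
Proof.
move=> [mu_le nu_le]; split=> [i j | j i] /=.
  apply/bigcapsP => j' adj_j'.
  exact: subset_trans (bigcap_inf j' adj_j') (nu_le j' i).
apply/subsetP => x; rewrite !inE => /existsP[y /and3P[yi_x y_in phi_y]].
apply/existsP; exists y; rewrite yi_x phi_y andbT /=.
apply/forallP => i'; apply/implyP => adj_i'.
by apply: (subsetP (mu_le i' j)); apply: (implyP (forallP y_in i')).
Qed.

Lemma msgs_step_eq m m' : msgs_eq m m' -> msgs_eq (step m) (step m').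
Proof. by move/msgs_eqP=> [m_le m_ge]; apply/msgs_eqP; split; apply: msgs_step_mono. Qed.

Lemma support_msgsS k : (0 < k)%N -> iterate k.+1 = step (iterate k).
Proof. by case: k. Qed.

Lemma support_msgs_ind (P : msgs A J -> Prop) :
  P (msgs_init A J) -> (forall m, P m -> P (step m)) ->
  forall k, (0 < k)%N -> P (iterate k).
Proof.
move=> P_init P_step; elim=> [// | [_ _ // | k IHk _]].
by rewrite support_msgsS //; apply: P_step; apply: IHk.
Qed.

Lemma support_msgs_decr k : (0 < k)%N -> msgs_sub (iterate k.+1) (iterate k).
Proof.
move=> k_gt0; rewrite support_msgsS //; move: k k_gt0.
apply: (support_msgs_ind (P := fun m => msgs_sub (step m) m)) => [| m m_decr].
  exact: msgs_sub_init.
exact: msgs_step_mono.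
Qed.

Lemma support_msgs_stalls : exists2 K, (0 < K)%N & msgs_eq (iterate K.+1) (iterate K).
Proof.
have [K K_gt0 size_eq] :
    exists2 K, (0 < K)%N & msgs_size (iterate K.+1) = msgs_size (iterate K).
  apply: nonincreasing_nat_stalls => k k_gt0.
  exact: (msgs_size_leqif (support_msgs_decr k_gt0)).1.
by exists K => //; apply: msgs_size_eq; first exact: support_msgs_decr.
Qed.

Lemma support_msgs_stable K : (0 < K)%N -> msgs_eq (iterate K.+1) (iterate K) ->
  forall k, (K <= k)%N -> msgs_eq (iterate k) (iterate K).
Proof.
move=> K_gt0 fixK k /subnKC <-; elim: (k - K)%N => [| d IHd].
  by rewrite addn0; split.
rewrite addnS support_msgsS ?(leq_trans K_gt0 (leq_addr _ _)) //.
apply: msgs_eq_trans fixK; rewrite support_msgsS //.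
exact: msgs_step_eq.
Qed.

Hypothesis phi_nonneg : forall j y, 0 <= phi j y.

Definition marg_msgs : msgs A J :=
  Msgs (fun i _ => marg_support phi i) (fun _ i => marg_support phi i).

Lemma glob_ge0 y : 0 <= glob phi y.
Proof. by apply: prodr_ge0 => j _. Qed.

Lemma glob_neq0_marg_support y i : glob phi y != 0 -> y i \in marg_support phi i.
Proof.
move=> gy_neq0; rewrite inE /marginal (bigD1 y) //=.
rewrite lt0r_neq0 // ltr_pwDl ?sumr_ge0 // => [|z _]; last exact: glob_ge0.
by rewrite lt_def gy_neq0 glob_ge0.
Qed.

Lemma marg_supportP i x :
  reflect (exists2 y : config A, y i = x & glob phi y != 0) (x \in marg_support phi i).
Proof.
rewrite inE /marginal; apply: (iffP idP) => [marg_neq0 | [y yi_x gy_neq0]].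
  have /existsP[y /andP[/eqP yi_x gy_neq0]] :
      [exists y : config A, (y i == x) && (glob phi y != 0)].
    apply: contraNT marg_neq0; rewrite negb_exists => /forallP no_y.
    by apply/eqP/big1 => y yi_x; apply/eqP; move: (no_y y); rewrite yi_x negbK.
  by exists y.
by have := glob_neq0_marg_support i gy_neq0; rewrite yi_x inE.
Qed.

Lemma marg_msgs_step m : msgs_sub marg_msgs m -> msgs_sub marg_msgs (step m).
Proof.
move=> [marg_mu marg_nu]; split=> [i j | j i] /=.
  by apply/bigcapsP => j' _; apply: marg_nu.
apply/subsetP => x /marg_supportP[y yi_x gy_neq0]; rewrite inE.
apply/existsP; exists y; rewrite yi_x eqxx /=; apply/andP; split.
  apply/forallP => i'; apply/implyP => _.
  exact: subsetP (marg_mu i' j) _ (glob_neq0_marg_support i' gy_neq0).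
by apply: contra gy_neq0 => phi_y_eq0; apply/prodf_eq0; exists j.
Qed.

Lemma support_msgs_marg k : (0 < k)%N -> msgs_sub marg_msgs (iterate k).
Proof.
move: k; apply: (support_msgs_ind (P := msgs_sub marg_msgs)).
  exact: msgs_sub_init.
exact: marg_msgs_step.
Qed.

End SupportPassingTheory.

Theorem mainTheorem2 (V : finType) (A : V -> finType) (J : finType)
    (alpha : J -> {set V}) (R : realDomainType)
    (phi : J -> config A -> R)
    (phi_local : forall (j : J) (y y' : config A),
        (forall i, i \in alpha j -> y i = y' i) -> phi j y = phi j y')
    (phi_nonneg : forall (j : J) (y : config A), 0 <= phi j y) :
  let m := support_msgs alpha phi in
  (* (1) monotonicity of the supports *)
  ((forall (k : nat) (i : V) (j : J), (0 < k)%N -> i \in alpha j ->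
      mu (m k.+1) i j \subset mu (m k) i j /\
      nu (m k.+1) j i \subset nu (m k) j i)
   (* ... hence the supports are eventually constant *)
   /\ exists K : nat, (0 < K)%N /\ forall (k : nat), (K <= k)%N ->
      forall (i : V) (j : J), i \in alpha j ->
        mu (m k) i j = mu (m K) i j /\ nu (m k) j i = nu (m K) j i)
  /\
  (* (2) the support of each marginal is contained in all messages *)
  (forall (k : nat) (i : V) (j : J), (0 < k)%N -> i \in alpha j ->
      marg_support phi i \subset mu (m k) i j /\
      marg_support phi i \subset nu (m k) j i).
Proof.
move=> m; split; first split.
- move=> k i j k_gt0 _.
  by have [mu_decr nu_decr] := support_msgs_decr alpha phi k_gt0.
- have [K K_gt0 fixK] := support_msgs_stalls alpha phi.
  exists K; split=> // k K_le_k i j _.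
  by have [Emu Enu] := support_msgs_stable K_gt0 fixK K_le_k.
- move=> k i j k_gt0 _.
  have [marg_mu marg_nu] := support_msgs_marg alpha phi_nonneg k_gt0.
  by split; [apply: marg_mu | apply: marg_nu].
Qed.
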